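(* Fix a treatment group $d$, a post-treatment target age $a$, and a control group $d'$ with $d'>a\ge d$. Suppose the No Anticipation assumption holds for both genders $g\in\{f,m\}$ and both groups $d$ and $d'$, and suppose $$\frac{\gamma_{\mathrm{PT}}(f,d,d',a)}{APO(f,d,\infty,a)}=\frac{\gamma_{\mathrm{PT}}(m,d,d',a)}{APO(m,d,\infty,a)}.$$ Then $$\theta(f,d,a)-\theta(m,d,a)=\big[\delta_\theta(f,d,d',a)-\delta_\theta(m,d,d',a)\big]\,\frac{\delta_{\mathrm{APO}}(m,d,d',a)}{APO(m,d,\infty,a)},$$ so that the left-hand side is identified whenever $APO(m,d,\infty,a)$ is known.
   Context: Population of individuals with gender $G\in\{f,m\}$ and age at first childbirth $D$ (with $D=\infty$ meaning never). For each age $a$ and each (possibly counterfactual) first-birth age $d'\in\mathbb{N}\cup\{\infty\}$ there is a potential outcome (earnings) $Y_a(d')$; observed earnings satisfy consistency $Y_a=Y_a(D)$. Define $APO(g,d,d',a)=\mathbb{E}[Y_a(d')\mid G=g,D=d]$, $ATE(g,d,a)=APO(g,d,d,a)-APO(g,d,\infty,a)$, and $\theta(g,d,a)=ATE(g,d,a)/APO(g,d,\infty,a)$. Descriptive quantities: $\delta_{\mathrm{APO}}(g,d,d',a)=\mathbb{E}[Y_{d-1}\mid G=g,D=d]+\mathbb{E}[Y_a-Y_{d-1}\mid G=g,D=d']$, $\delta_{\mathrm{ATE}}(g,d,d',a)=\mathbb{E}[Y_a\mid G=g,D=d]-\delta_{\mathrm{APO}}(g,d,d',a)$, $\delta_\theta(g,d,d',a)=\delta_{\mathrm{ATE}}(g,d,d',a)/\delta_{\mathrm{APO}}(g,d,d',a)$.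 Parallel-trends violation: $\gamma_{\mathrm{PT}}(g,d,d',a)=APO(g,d,\infty,a)-APO(g,d,\infty,d-1)-[APO(g,d',\infty,a)-APO(g,d',\infty,d-1)]$. No Anticipation for gender $g$ and group $d$: $APO(g,d,d,b)=APO(g,d,\infty,b)$ for every age $b<d$. All denominators appearing are assumed nonzero. *)

From HB Require Import structures.
From mathcomp Require Import all_boot all_order all_algebra.
From mathcomp Require Import all_classical all_reals all_analysis.
Set Implicit Arguments. Unset Strict Implicit. Unset Printing Implicit Defensive.
Import Order.TTheory GRing.Theory Num.Theory.
Local Open Scope classical_set_scope.
Local Open Scope ring_scope.

Inductive gender := female | male.

Section Defs.
Context {R : realType} {dT : measure_display} {T : measurableType dT}.
Variable P : probability T R.
(* G : gender; D : age at first birth, None = never (infinity);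
   Y a d' : potential earnings at age a under first-birth age d'. *)
Variables (G : T -> gender) (D : T -> option nat) (Y : nat -> option nat -> T -> R).

Definition grp (g : gender) (k : option nat) : set T :=
  [set w | G w = g /\ D w = k].

Definition cexp (X : T -> R) (A : set T) : R :=
  fine (\int[P]_(w in A) (X w)%:E) / fine (P A).

(* observed earnings, consistency Y_a = Y_a(D) built in *)
Definition Yobs (a : nat) (w : T) : R := Y a (D w) w.

Definition APO (g : gender) (d : nat) (d' : option nat) (a : nat) : R :=
  cexp (Y a d') (grp g (Some d)).

Definition ATE g d a := APO g d (Some d) a - APO g d None a.
Definition theta g d a := ATE g d a / APO g d None a.

Definition delta_APO (g : gender) (d d' a : nat) : R :=
  cexp (Yobs d.-1) (grp g (Some d))
  + cexp (fun w => Yobs a w - Yobs d.-1 w) (grp g (Some d')).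
Definition delta_ATE g d d' a :=
  cexp (Yobs a) (grp g (Some d)) - delta_APO g d d' a.
Definition delta_theta g d d' a := delta_ATE g d d' a / delta_APO g d d' a.

Definition gamma_PT (g : gender) (d d' a : nat) : R :=
  APO g d None a - APO g d None d.-1 - (APO g d' None a - APO g d' None d.-1).

Definition NoAnticipation (g : gender) (d : nat) : Prop :=
  forall b : nat, (b < d)%N -> APO g d (Some d) b = APO g d None b.

End Defs.

From HB Require Import structures.
From mathcomp Require Import all_boot all_order all_algebra.
From mathcomp Require Import all_classical all_reals all_analysis.
From mathcomp Require Import ring.
Import Order.TTheory GRing.Theory Num.Theory.
Local Open Scope classical_set_scope.
Local Open Scope ring_scope.

(* No Anticipation turns every observed pre-birth mean into an untreated
   potential-outcome mean, so the descriptive baseline is the causal one shifted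
   by the parallel-trends violation: delta_APO = APO(infinity) - gamma_PT.  If
   gamma_PT / APO(infinity) is a common ratio r for both genders, then
   delta_APO = (1 - r) APO(infinity) for both, hence
   delta_theta + 1 = (theta + 1) / (1 - r), and the gender gap in delta_theta is
   the gap in theta inflated by 1 / (1 - r) = APO_m(infinity) / delta_APO_m. *)

Lemma relative_gap_common_bias (F : fieldType) (xf xm af am gf gm : F) :
  af != 0 -> am != 0 -> af - gf != 0 -> am - gm != 0 ->
  gf / af = gm / am ->
  (xf - af) / af - (xm - am) / am
  = ((xf - (af - gf)) / (af - gf) - (xm - (am - gm)) / (am - gm))
    * ((am - gm) / am).
Proof.
move=> af0 am0 + + ratio.
have [r -> ->] : exists2 r, gf = r * af & gm = r * am.
  by exists (gm / am); rewrite ?mulfVK // -ratio mulfVK.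
by move=> bf0 bm0; field; rewrite af0 am0 bf0 bm0.
Qed.

Section ConditionalExpectation.
Context {R : realType} {dT : measure_display} {T : measurableType dT}.
Variable P : probability T R.

Lemma eq_cexp (X Z : T -> R) (A : set T) :
  (forall w, A w -> X w = Z w) -> cexp P X A = cexp P Z A.
Proof.
move=> XZ; rewrite /cexp; congr (fine _ / _).
by apply: eq_integral => w; rewrite inE => /XZ ->.
Qed.

Lemma cexpB (X Z : T -> R) (A : set T) :
  measurable A ->
  P.-integrable setT (fun w => (X w)%:E) ->
  P.-integrable setT (fun w => (Z w)%:E) ->
  cexp P (fun w => X w - Z w) A = cexp P X A - cexp P Z A.
Proof.
move=> mA iX iZ.
have iXA : P.-integrable A (EFin \o X) by exact: integrableS iX.
have iZA : P.-integrable A (EFin \o Z) by exact: integrableS iZ.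
rewrite /cexp -mulrBl; congr (_ / _).
under eq_integral do rewrite EFinB.
by rewrite integralB_EFin // fineB //; exact: integrable_fin_num.
Qed.

End ConditionalExpectation.

Section ObservedMeans.
Context {R : realType} {dT : measure_display} {T : measurableType dT}.
Variable P : probability T R.
Variables (G : T -> gender) (D : T -> option nat) (Y : nat -> option nat -> T -> R).
Hypothesis grp_measurable : forall g k, measurable (grp G D g k).
Hypothesis Y_integrable :
  forall b k, P.-integrable setT (fun w => (Y b k w)%:E).

Lemma cexp_Yobs_grp (g : gender) (k b : nat) :
  cexp P (Yobs D Y b) (grp G D g (Some k)) = APO P G D Y g k (Some k) b.
Proof. by apply: eq_cexp => w [_ Dw]; rewrite /Yobs Dw. Qed.

Lemma cexp_YobsB_grp (g : gender) (k b c : nat) :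
  cexp P (fun w => Yobs D Y b w - Yobs D Y c w) (grp G D g (Some k))
  = APO P G D Y g k (Some k) b - APO P G D Y g k (Some k) c.
Proof.
rewrite /APO -cexpB //.
by apply: eq_cexp => w [_ Dw]; rewrite /Yobs Dw.
Qed.

Lemma delta_APO_NoAnticipation (g : gender) (d d' a : nat) :
  (0 < d)%N -> (d <= d')%N -> (a < d')%N ->
  NoAnticipation P G D Y g d -> NoAnticipation P G D Y g d' ->
  delta_APO P G D Y g d d' a = APO P G D Y g d None a - gamma_PT P G D Y g d d' a.
Proof.
move=> d_gt0 dd' ad' NAd NAd'.
have pred_d_lt : (d.-1 < d)%N by rewrite prednK.
rewrite /delta_APO /gamma_PT cexp_Yobs_grp cexp_YobsB_grp NAd // NAd' //.
by rewrite NAd'; [ring | exact: leq_trans dd'].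
Qed.

End ObservedMeans.

Theorem proposition2 (R : realType) (dT : measure_display) (T : measurableType dT)
  (P : probability T R) (G : T -> gender) (D : T -> option nat)
  (Y : nat -> option nat -> T -> R) (d d' a : nat)
  (hmeas : forall g k, measurable (grp G D g k))
  (hint : forall (b : nat) (k : option nat), P.-integrable setT (fun w => (Y b k w)%:E))
  (hd : (0 < d)%N) (hda : (d <= a)%N) (had' : (a < d')%N)
  (hNA : forall g, NoAnticipation P G D Y g d /\ NoAnticipation P G D Y g d')
  (hAPO : forall g, APO P G D Y g d None a != 0)
  (hdAPO : forall g, delta_APO P G D Y g d d' a != 0)
  (hPT : gamma_PT P G D Y female d d' a / APO P G D Y female d None a
       = gamma_PT P G D Y male d d' a / APO P G D Y male d None a) :
  theta P G D Y female d a - theta P G D Y male d a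
  = (delta_theta P G D Y female d d' a - delta_theta P G D Y male d d' a)
    * (delta_APO P G D Y male d d' a / APO P G D Y male d None a).
Proof.
have dd' : (d <= d')%N by rewrite (leq_trans hda) // ltnW.
have delta_APOE g : delta_APO P G D Y g d d' a
    = APO P G D Y g d None a - gamma_PT P G D Y g d d' a.
  by have [NAd NAd'] := hNA g; exact: delta_APO_NoAnticipation.
rewrite /theta /delta_theta /delta_ATE /ATE.
rewrite !(cexp_Yobs_grp P G D Y) !delta_APOE.
by apply: relative_gap_common_bias => //; rewrite -delta_APOE.
Qed.
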